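(* The 2-equivalence $\mathbf{RCat}\simeq\mathbf{LCat}$ (sending a restriction category $\mathbb{X}$ to $\mathbf{L}[\mathbb{X}]$ and a local category $\mathbb{C}$ to $\mathbf{R}[\mathbb{C}]$) restricts to a 2-equivalence $\mathbf{sRCat}\simeq\mathbf{sLCat}$.
   Context: Composition is diagrammatic. A restriction category is a category with $f\mapsto\bar f:A\to A$ for $f:A\to B$ satisfying $\bar ff=f$; $\bar f\bar g=\bar g\bar f$ and $\bar g\bar f=\overline{\bar gf}$ for $f:A\to B$, $g:A\to C$; $f\bar g=\overline{fg}f$ for $f:A\to B$, $g:B\to C$. Total: $\bar f=\mathrm{id}$; restriction idempotent: $e=\bar e$. Restriction functors satisfy $F\bar f=\overline{Ff}$; total natural transformations are natural transformations with total components. $\mathbf{RCat}$: restriction categories, restriction functors, total natural transformations. A split restriction category is one in which every restriction idempotent $e:A\to A$ splits: there are $s:E\to A$, $r:A\to E$ with $sr=\mathrm{id}_E$ and $rs=e$. $\mathbf{sRCat}$: full 2-subcategory of $\mathbf{RCat}$ on split restriction categories. A local category is a category with, for each object $M$, an object $\mathsf{L}M$ and $\eta_M:M\to\mathsf{L}M$ such that $\mathsf{L}\mathsf{L}M=\mathsf{L}M$, $\eta_{\mathsf{L}M}=\mathrm{id}$, each $\eta_M$ is monic, and for each $f:N\to\mathsf{L}M$ there is a pullback of $\eta_M$ along $f$ with leg $m:P\to N$ such that $\mathsf{L}P=\mathsf{L}N$ and $m\eta_N=\eta_P$. Total object: $M=\mathsf{L}M$ and $\eta_M=\mathrm{id}_M$.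 Local functors: $F\mathsf{L}M=\mathsf{L}FM$, $F\eta_M=\eta_{FM}$, preserving pullbacks of $\eta_N$ along any $f:M\to\mathsf{L}N$. Total natural transformations: natural transformations whose naturality squares at each $\eta_M$ are pullbacks. $\mathbf{LCat}$: local categories, local functors, total natural transformations. A split local category is one in which every object is isomorphic to a total object. $\mathbf{sLCat}$: full 2-subcategory of $\mathbf{LCat}$ on split local categories. $\mathbf{L}[\mathbb{X}]$: objects $(A,a)$ with $a=\bar a$; morphisms $f:(A,a)\to(B,b)$ are $f:A\to B$ with $\bar f=a$, $fb=f$; identity $a$; $\mathsf{L}(A,a)=(A,\mathrm{id}_A)$, $\eta_{(A,a)}=a$. $\mathbf{R}[\mathbb{C}]$: objects total objects; morphisms $M\to N$ are isomorphism classes of pairs $(U,f)$ with $\mathsf{L}U=M$, $f:U\to N$ ($(U,f)\cong(V,g)$ via iso $\varphi:U\to V$ with $\varphi\eta_V=\eta_U$, $\varphi g=f$); identity $(M,\mathrm{id}_M)$; $(U,f)(V,g)=(W,\pi_Vg)$ with $W,\pi_V$ a pullback of $\eta_V$ along $f$; restriction $\overline{(U,f)}=(U,\eta_U)$. *)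

(* Composition is
   diagrammatic: [f ;; g] means "first f, then g". *)
Set Implicit Arguments.
Unset Strict Implicit.

Record Cat : Type := {
  ob : Type;
  hom : ob -> ob -> Type;
  idm : forall A, hom A A;
  comp : forall A B C, hom A B -> hom B C -> hom A C;
  comp_assoc : forall A B C D (f : hom A B) (g : hom B C) (h : hom C D),
      comp (comp f g) h = comp f (comp g h);
  comp_id_l : forall A B (f : hom A B), comp (idm A) f = f;
  comp_id_r : forall A B (f : hom A B), comp f (idm B) = f }.

Arguments ob : clear implicits.
Arguments hom : clear implicits.
Arguments idm {c} A.
Arguments comp {c A B C} f g.
Notation "f ;; g" := (comp f g) (at level 40, left associativity).

(** Equality of two morphisms with common domain but possibly (a priori)
    different codomains: equal codomains and equal morphisms. *)
Definition heq (C : Cat) (W X Y : ob C) (u : hom C W X) (v : hom C W Y) : Prop :=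
  existT (fun Z => hom C W Z) X u = existT (fun Z => hom C W Z) Y v.

Definition is_iso (C : Cat) (A B : ob C) (f : hom C A B) : Prop :=
  exists g : hom C B A, f ;; g = idm A /\ g ;; f = idm B.

(** [W, m, p] is a pullback of [g] along [f] (square [m;;f = p;;g]).
    Codomains of f and g are compared through [heq]; when they coincide
    this is the usual notion of pullback. *)
Definition is_pb (C : Cat) (U V X Y W : ob C) (f : hom C U X) (g : hom C V Y)
    (m : hom C W U) (p : hom C W V) : Prop :=
  heq (m ;; f) (p ;; g) /\
  forall (Q : ob C) (a : hom C Q U) (b : hom C Q V),
    heq (a ;; f) (b ;; g) ->
    exists! h : hom C Q W, h ;; m = a /\ h ;; p = b.

Record RestrictionCategory : Type := {
  rcat :> Cat;
  rst : forall (A B : ob rcat), hom rcat A B -> hom rcat A A;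
  R1 : forall A B (f : hom rcat A B), rst f ;; f = f;
  R2 : forall A B C (f : hom rcat A B) (g : hom rcat A C),
      rst f ;; rst g = rst g ;; rst f;
  R3 : forall A B C (f : hom rcat A B) (g : hom rcat A C),
      rst g ;; rst f = rst (rst g ;; f);
  R4 : forall A B C (f : hom rcat A B) (g : hom rcat B C),
      f ;; rst g = rst (f ;; g) ;; f }.

Arguments rst {r A B} f.

Definition split_restriction (X : RestrictionCategory) : Prop :=
  forall (A : ob X) (e : hom X A A), rst e = e ->
    exists (E : ob X) (s : hom X E A) (r : hom X A E),
      s ;; r = idm E /\ r ;; s = e.

Record LObj (X : RestrictionCategory) : Type := {
  lA : ob X;
  la : hom X lA lA;
  la_ri : rst la = la }.

Definition LHom (X : RestrictionCategory) (P Q : LObj X) : Type :=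
  { f : hom X (lA P) (lA Q) | rst f = la P /\ f ;; la Q = f }.

Lemma rst_idm (X : RestrictionCategory) (A : ob X) : rst (idm A) = idm A.
Proof. rewrite <- (comp_id_r (rst (idm A))). apply R1. Qed.

Definition LL (X : RestrictionCategory) (P : LObj X) : LObj X :=
  {| lA := lA P; la := idm (lA P); la_ri := rst_idm (lA P) |}.

(** Total object of L[X]: L P = P (then eta_P = a = id automatically). *)
Definition L_total (X : RestrictionCategory) (P : LObj X) : Prop := LL P = P.

(** L[X] is split: every object is isomorphic (in L[X], where composition is
    that of X and the identity on (A,a) is a) to a total object. *)
Definition split_local_L (X : RestrictionCategory) : Prop :=
  forall P : LObj X, exists T : LObj X, L_total T /\
    exists (f : LHom P T) (g : LHom T P),
      proj1_sig f ;; proj1_sig g = la P /\ proj1_sig g ;; proj1_sig f = la T.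

Record LocalCategory : Type := {
  lcat :> Cat;
  Lo : ob lcat -> ob lcat;
  eta : forall M, hom lcat M (Lo M);
  (* L L M = L M and eta_{L M} = id *)
  LL_eta : forall M, heq (eta (Lo M)) (idm (Lo M));
  eta_monic : forall M A (x y : hom lcat A M), x ;; eta M = y ;; eta M -> x = y;
  eta_pb : forall M N (f : hom lcat N (Lo M)),
      exists (P : ob lcat) (m : hom lcat P N) (p : hom lcat P M),
        is_pb f (eta M) m p /\ Lo P = Lo N /\ heq (m ;; eta N) (eta P) }.

Arguments Lo {l} M.
Arguments eta {l} M.

(** total object: M = L M and eta_M = id_M *)
Definition total (C : LocalCategory) (M : ob C) : Prop := heq (eta M) (idm M).

Definition split_local (C : LocalCategory) : Prop :=
  forall M : ob C, exists T : ob C, total T /\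
    exists (f : hom C M T) (g : hom C T M), f ;; g = idm M /\ g ;; f = idm T.

Lemma total_L (C : LocalCategory) (M : ob C) : total M -> Lo M = M.
Proof. intro H. exact (f_equal (@projT1 _ _) H). Qed.

Definition tob (C : LocalCategory) : Type := { M : ob C | total M }.

(** representatives (U,f) of morphisms M -> N of R[C]: L U = M, f : U -> N *)
Record rspan (C : LocalCategory) (M N : ob C) : Type := {
  sU : ob C;
  sUL : Lo sU = M;
  sf : hom C sU N }.

Definition iso_raw (C : LocalCategory) (U V N : ob C) (f : hom C U N) (g : hom C V N)
  : Prop :=
  exists phi : hom C U V, is_iso phi /\ heq (phi ;; eta V) (eta U) /\ phi ;; g = f.

(** equality of morphisms of R[C] (isomorphism classes) *)
Definition rspan_iso (C : LocalCategory) (M N : ob C) (s t : rspan M N) : Prop :=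
  iso_raw (sf s) (sf t).

Definition rid (C : LocalCategory) (M : tob C) : rspan (proj1_sig M) (proj1_sig M) :=
  {| sU := proj1_sig M; sUL := total_L (proj2_sig M); sf := idm (proj1_sig M) |}.

(** restriction: overline (U,f) = (U, eta_U) *)
Definition rbar (C : LocalCategory) (M N : ob C) (s : rspan M N) : rspan M M :=
  {| sU := sU s; sUL := sUL s;
     sf := eq_rect _ (hom C (sU s)) (eta (sU s)) M (sUL s) |}.

(** [c] represents the composite (U,f)(V,g) = (W, pi_V ;; g), where
    (W, m, pi_V) is a pullback of eta_V along f of the kind provided by the
    local structure (L W = L U and m ;; eta_U = eta_W). *)
Definition rcomp_rel (C : LocalCategory) (M N K : ob C)
    (s : rspan M N) (t : rspan N K) (c : rspan M K) : Prop :=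
  exists (W : ob C) (m : hom C W (sU s)) (p : hom C W (sU t)),
    is_pb (sf s) (eta (sU t)) m p /\ Lo W = Lo (sU s) /\
    heq (m ;; eta (sU s)) (eta W) /\ iso_raw (sf c) (p ;; sf t).

(** R[C] is split: every restriction idempotent e (e = overline e in R[C])
    splits: s;r = id_E and r;s = e in R[C]. *)
Definition split_restriction_R (C : LocalCategory) : Prop :=
  forall (M : tob C) (e : rspan (proj1_sig M) (proj1_sig M)),
    rspan_iso e (rbar e) ->
    exists (E : tob C) (s : rspan (proj1_sig E) (proj1_sig M))
           (r : rspan (proj1_sig M) (proj1_sig E)),
      rcomp_rel s r (rid E) /\ rcomp_rel r s e.

(* Both halves are the same observation: a splitting of an idempotent is an
   isomorphism onto a total object.  In a restriction category, if the
   restriction idempotent a splits as a = r;s with s;r = 1, then s is total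
   and the restriction of r is a, so r and s are mutually inverse morphisms
   of L[X] between (A,a) and (E,1).  In a local category, a restriction
   idempotent e = (U,f) of R[C] agrees with its restriction (U, eta_U), and
   an isomorphism phi : U -> T onto a total object splits it as (U, phi)
   followed by (T, phi^-1 ;; eta_U); both composites are computed with
   pullbacks of the form (1, x) of a monic g along x ;; g. *)
From Stdlib Require Import Eqdep.

Set Implicit Arguments.
Unset Strict Implicit.

Lemma heq_eq (C : Cat) (W X : ob C) (u v : hom C W X) : heq u v -> u = v.
Proof. exact (inj_pair2 _ _ _ _ _). Qed.

Lemma heq_comp_l (C : Cat) (Q W X Y : ob C) (x : hom C Q W)
    (u : hom C W X) (v : hom C W Y) :
  heq u v -> heq (x ;; u) (x ;; v).
Proof.
  intro H.
  exact (f_equal (fun s : {Z : ob C & hom C W Z} =>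
           existT (fun Z => hom C Q Z) (projT1 s) (x ;; projT2 s)) H).
Qed.

Lemma heq_rect (C : Cat) (W X Y : ob C) (u : hom C W X) (H : X = Y) :
  heq (eq_rect X (hom C W) u Y H) u.
Proof. destruct H. reflexivity. Qed.

Section SplitRestriction.

Variable X : RestrictionCategory.

Lemma rst_comp_rst (A B C : ob X) (f : hom X A B) (g : hom X B C) :
  rst (f ;; rst g) = rst (f ;; g).
Proof.
  rewrite R4, <- R3, R2, R3, <- comp_assoc, R1. reflexivity.
Qed.

Lemma rst_section (A E : ob X) (s : hom X E A) (r : hom X A E) :
  s ;; r = idm E -> rst s = idm E.
Proof.
  intro Hsr.
  rewrite <- (comp_id_l (rst s)), <- rst_idm, <- Hsr, R2, R3,
    <- comp_assoc, R1.
  reflexivity.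
Qed.

Lemma rst_retraction (A E : ob X) (s : hom X E A) (r : hom X A E) (e : hom X A A) :
  s ;; r = idm E -> r ;; s = e -> rst e = e -> rst r = e.
Proof.
  intros Hsr Hrs He.
  transitivity (rst (r ;; rst s)).
  - rewrite (rst_section Hsr), comp_id_r. reflexivity.
  - rewrite rst_comp_rst, Hrs. exact He.
Qed.

Lemma split_local_L_of_split_restriction :
  split_restriction X -> split_local_L X.
Proof.
  intros HX P.
  destruct (HX (lA P) (la P) (la_ri P)) as [E [s [r [Hsr Hrs]]]].
  set (T := {| lA := E; la := idm E; la_ri := rst_idm E |}).
  exists T. split; [reflexivity |].
  assert (Hs : s ;; la P = s).
  { rewrite <- Hrs, <- comp_assoc, Hsr. apply comp_id_l. }
  exists (exist _ r (conj (rst_retraction Hsr Hrs (la_ri P)) (comp_id_r r))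
            : LHom P T).
  exists (exist _ s (conj (rst_section Hsr) Hs) : LHom T P).
  split; assumption.
Qed.

End SplitRestriction.

Definition monic (C : Cat) (A B : ob C) (g : hom C A B) : Prop :=
  forall (Z : ob C) (x y : hom C Z A), x ;; g = y ;; g -> x = y.

Lemma is_pb_monic (C : Cat) (W V X Y : ob C) (f : hom C W X) (g : hom C V Y)
    (x : hom C W V) :
  monic g -> heq f (x ;; g) -> is_pb f g (idm W) x.
Proof.
  intros Hg Hf. split.
  - rewrite comp_id_l. exact Hf.
  - intros Q a b Hab. exists a. split.
    + split; [apply comp_id_r |].
      apply Hg, heq_eq. rewrite comp_assoc.
      unfold heq in *. rewrite <- Hab. symmetry. exact (heq_comp_l a Hf).
    + intros h [Hh _]. rewrite comp_id_r in Hh. symmetry. exact Hh.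
Qed.

Lemma iso_raw_eq (C : LocalCategory) (U N : ob C) (f g : hom C U N) :
  f = g -> iso_raw f g.
Proof.
  intros <-. exists (idm U).
  split; [exists (idm U); split; apply comp_id_l |].
  split; rewrite comp_id_l; reflexivity.
Qed.

Section SplitLocal.

Variable C : LocalCategory.

Lemma rcomp_rel_factor (M N K : ob C) (s : rspan M N) (t : rspan N K)
    (c : rspan M K) (x : hom C (sU s) (sU t)) :
  heq (sf s) (x ;; eta (sU t)) -> iso_raw (sf c) (x ;; sf t) ->
  rcomp_rel s t c.
Proof.
  intros Hx Hc.
  exists (sU s), (idm _), x.
  split; [exact (is_pb_monic (@eta_monic C _) Hx) |].
  split; [reflexivity |].
  split; [rewrite comp_id_l; reflexivity | exact Hc].
Qed.

Lemma split_restriction_R_of_split_local :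
  split_local C -> split_restriction_R C.
Proof.
  intros HC [M HM] e He.
  destruct (HC (sU e)) as [T [HT [phi [psi [Hpp Hqq]]]]].
  exists (exist _ T HT).
  exists {| sU := T; sUL := total_L HT; sf := psi ;; sf (rbar e) |}.
  exists {| sU := sU e; sUL := sUL e; sf := phi |}.
  split.
  - apply rcomp_rel_factor with (x := psi).
    + exact (heq_comp_l psi (heq_rect (eta (sU e)) (sUL e))).
    + apply iso_raw_eq. symmetry. exact Hqq.
  - apply rcomp_rel_factor with (x := phi).
    + pose proof (heq_comp_l phi HT) as Hphi.
      rewrite comp_id_r in Hphi. symmetry. exact Hphi.
    + change (iso_raw (sf e) (phi ;; (psi ;; sf (rbar e)))).
      rewrite <- comp_assoc, Hpp, comp_id_l. exact He.
Qed.

End SplitLocal.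

Theorem theorem7p6 :
  (forall X : RestrictionCategory, split_restriction X -> split_local_L X) /\
  (forall C : LocalCategory, split_local C -> split_restriction_R C).
Proof.
  split.
  - exact split_local_L_of_split_restriction.
  - exact split_restriction_R_of_split_local.
Qed.
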